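(* Let $n\in\mathbb{N}$ and let $k$ be an integer with $0\le k\le n-1$. Then $$|PF_{n+1,k}| = \sum_{i=0}^{n} \binom{n}{i}\, \min\big((i+1)+k,\; n+1\big)\, |PF_{i,k}|\,(n-i+1)^{n-i-1},$$ with the convention $|PF_{0,k}|=1$.
   Context: For $n\in\mathbb{N}=\{1,2,\dots\}$ let $[n]=\{1,\dots,n\}$. A parking preference of length $n$ is a tuple $\alpha=(a_1,\dots,a_n)\in[n]^n$; let $PP_n=[n]^n$. For an integer $k\ge 0$, the $k$-Naples parking rule is as follows. There are $n$ parking spots numbered $1,\dots,n$ from west to east, initially empty, and cars $c_1,\dots,c_n$ arrive in this order; car $c_i$ has preferred spot $a_i$. If spot $a_i$ is empty, $c_i$ parks there. Otherwise $c_i$ checks the spots $a_i-1,a_i-2,\dots,a_i-k$, in this order, skipping any that are $<1$, and parks in the first empty one among them. If all these spots are occupied (or there are none), $c_i$ drives east and parks in the first empty spot with number greater than $a_i$; if there is no such spot, $c_i$ fails to park. $\alpha$ is a $k$-Naples parking function of length $n$ if every car parks. $PF_{n,k}$ denotes the set of $k$-Naples parking functions of length $n$ (defined for every integer $k\ge 0$). For $k=0$ this is the classical parking rule, and $PF_{n,0}=PF_n$ is the set of classical parking functions. *)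

From mathcomp Require Import all_boot.
Set Implicit Arguments. Unset Strict Implicit. Unset Printing Implicit Defensive.

(* Parking spots are numbered 1..n.  [occ] is the list of occupied spots.
   [park_car n k occ a] returns the spot where a car with preference [a]
   parks under the k-Naples rule, or None if it fails. *)
Definition park_car (n k : nat) (occ : seq nat) (a : nat) : option nat :=
  if a \notin occ then Some a else
  (* spots a-1, a-2, ..., a-k that are >= 1, in this order *)
  let back := [seq s <- [seq a - j | j <- iota 1 k & j < a] | 1 <= s] in
  match [seq s <- back | s \notin occ] with
  | s :: _ => Some s
  | [::] =>
    match [seq s <- iota a.+1 (n - a) | s \notin occ] with
    | s :: _ => Some s
    | [::] => None
    end
  end.

Fixpoint park_all (n k : nat) (occ : seq nat) (prefs : seq nat) : option (seq nat) :=
  match prefs with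
  | [::] => Some occ
  | a :: prefs' =>
    match park_car n k occ a with
    | Some s => park_all n k (s :: occ) prefs'
    | None => None
    end
  end.

(* A parking preference of length n: alpha : 'I_n -> 'I_n, where car c_(i+1)
   prefers spot (alpha i) + 1 in [n]. *)
Definition is_naples_pf (n k : nat) (alpha : {ffun 'I_n -> 'I_n}) : bool :=
  park_all n k [::] [seq (alpha i).+1 | i <- enum 'I_n] != None.

Definition PF (n k : nat) : {set {ffun 'I_n -> 'I_n}} :=
  [set alpha | is_naples_pf k alpha].

From mathcomp Require Import all_boot.
From mathcomp Require Import zify.
Set Implicit Arguments. Unset Strict Implicit. Unset Printing Implicit Defensive.

(* Classify a preference word of length n+1 by its first n letters.  If the
   first n cars all park, exactly one spot e is left empty, and the last car
   parks iff its preference is at most e + k; this gives the factor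
   min(e+k, n+1) ([last_car_count]).  No car prefers e, so the first n
   letters are a shuffle of a word over {1..e-1} and a word over {e+1..n+1},
   and the two subwords park independently ([leaves_empty_split]).  The left
   subword must have length e-1 and is exactly a k-Naples parking function
   of length e-1 ([leaves_empty_left]).  The right subword, on m = n+1-e
   spots preceded by the empty spot e, behaves like k-Naples parking on a
   circle of m+1 spots where spot 0 plays the role of e ([line_circle_run]);
   by Pollak's rotation argument exactly (m+1)^(m-1) words of length m leave
   spot 0 empty ([circular_count]).  The shuffle contributes C(n, e-1)
   ([empty_spot_count]).  The argument does not need the bounds on n and k. *)

Fixpoint wsum (A : seq nat) (L : nat) (f : seq nat -> nat) : nat :=
  if L is L'.+1 then \sum_(a <- A) wsum A L' (fun w => f (a :: w)) else f [::].

Lemma eq_wsum A L f g :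
  (forall w, all (fun x => x \in A) w -> size w = L -> f w = g w) ->
  wsum A L f = wsum A L g.
Proof.
elim: L f g => [|L IH] f g fg /=; first exact: fg.
apply: eq_big_seq => a aA; apply: IH => w Aw Lw.
by apply: fg; rewrite /= ?aA ?Lw.
Qed.

Lemma wsum_sum (I : Type) (r : seq I) A L (g : I -> seq nat -> nat) :
  wsum A L (fun w => \sum_(i <- r) g i w) = \sum_(i <- r) wsum A L (g i).
Proof.
elim: L g => [|L IH] g //=.
by rewrite (eq_bigr _ (fun a _ => IH (fun i w => g i (a :: w)))) exchange_big.
Qed.

Lemma wsumZ A L c f : wsum A L (fun w => c * f w) = c * wsum A L f.
Proof.
elim: L f => [|L IH] f //=.
by rewrite big_distrr; apply: eq_bigr => a _; apply: IH.
Qed.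

Lemma wsum_rcons A L f :
  wsum A L.+1 f = wsum A L (fun w => \sum_(a <- A) f (rcons w a)).
Proof.
elim: L f => [|L IH] f //=.
by apply: eq_bigr => a _; apply: (IH (fun w => f (a :: w))).
Qed.

Lemma wsum_map (g : nat -> nat) A L f :
  wsum (map g A) L f = wsum A L (fun w => f (map g w)).
Proof.
elim: L f => [|L IH] f //=.
by rewrite big_map; apply: eq_bigr => a _; apply: IH.
Qed.

Lemma perm_wsum A B L f : perm_eq A B -> wsum A L f = wsum B L f.
Proof.
move=> AB; elim: L f => [|L IH] f //=.
by rewrite (perm_big _ AB); apply: eq_bigr => a _; apply: IH.
Qed.

Lemma wsum1 A L : wsum A L (fun _ => 1) = size A ^ L.
Proof.
elim: L => [|L IH] //=.
by rewrite (eq_bigr _ (fun a _ => IH)) big_const_seq count_predT iter_addn_0 expnS mulnC.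
Qed.

Lemma wsum_eq0 A L f :
  (forall w, all (fun x => x \in A) w -> size w = L -> f w = 0) -> wsum A L f = 0.
Proof.
move=> f0; rewrite (eq_wsum (g := fun _ => 0)) //.
by elim: L {f0} => [|L IH] //=; apply: big1.
Qed.

Lemma wsum_filter (p : pred nat) A L f :
  (forall w, all (fun x => x \in A) w -> size w = L -> f w != 0 -> all p w) ->
  wsum A L f = wsum [seq x <- A | p x] L f.
Proof.
elim: L f => [|L IH] f fp //=.
rewrite big_filter [in RHS]big_mkcond /=; apply: eq_big_seq => a aA.
have fp_a w : all (fun x => x \in A) w -> size w = L -> f (a :: w) != 0 -> p a && all p w.
  by move=> Aw Lw; apply: fp; rewrite /= ?aA ?Lw.
case pa: (p a).
  by apply: IH => w Aw Lw /(fp_a w Aw Lw) /andP[].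
by apply: wsum_eq0 => w Aw Lw; apply/eqP; apply: contraFT pa => /(fp_a w Aw Lw)/andP[].
Qed.

(* Pascal's rule, in the form of a binomial convolution. *)
Lemma binomial_convolution (c1 c2 : nat -> nat) L :
  \sum_(i < L.+1) 'C(L, i) * c1 i.+1 * c2 (L - i) +
  \sum_(i < L.+1) 'C(L, i) * c1 i * c2 (L.+1 - i) =
  \sum_(i < L.+2) 'C(L.+1, i) * c1 i * c2 (L.+1 - i).
Proof.
rewrite [in RHS]big_ord_recl.
rewrite [X in _ = _ + X](eq_bigr (fun i : 'I_L.+1 =>
    'C(L, i) * c1 i.+1 * c2 (L - i) + 'C(L, i.+1) * c1 i.+1 * c2 (L - i))); last first.
  by move=> i _; rewrite /= /bump /= add1n binS subSS addnC !mulnDl.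
rewrite big_split /= [X in _ = _ + (_ + X)]big_ord_recr /= (bin_small (ltnSn L)).
rewrite [X in _ + X = _]big_ord_recl /=.
rewrite [X in _ + (_ + X) = _](eq_bigr (fun i : 'I_L =>
    'C(L, i.+1) * c1 i.+1 * c2 (L - i))); last by move=> i _; rewrite /= /bump /= add1n subSS.
rewrite !bin0 subn0; lia.
Qed.

Lemma wsum_shuffle A1 A2 L (f1 f2 : seq nat -> nat) :
  (forall x, x \in A1 -> x \notin A2) ->
  wsum (A1 ++ A2) L
    (fun w => f1 [seq x <- w | x \in A1] * f2 [seq x <- w | x \in A2]) =
  \sum_(i < L.+1) 'C(L, i) * wsum A1 i f1 * wsum A2 (L - i) f2.
Proof.
move=> A12; elim: L f1 f2 => [|L IH] f1 f2; first by rewrite big_ord1 /= mul1n.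
rewrite /= big_cat.
rewrite -(binomial_convolution (fun i => wsum A1 i f1) (fun j => wsum A2 j f2)).
congr (_ + _).
  rewrite (eq_big_seq (fun a => \sum_(i < L.+1) 'C(L, i) *
      wsum A1 i (fun w => f1 (a :: w)) * wsum A2 (L - i) f2)); last first.
    move=> a aA1; rewrite -IH; apply: eq_wsum => w _ _ /=.
    by rewrite aA1 (negbTE (A12 _ aA1)).
  rewrite exchange_big; apply: eq_bigr => i _ /=.
  by rewrite -!big_distrl -big_distrr.
rewrite (eq_big_seq (fun a => \sum_(i < L.+1) 'C(L, i) *
    wsum A1 i f1 * wsum A2 (L - i) (fun w => f2 (a :: w)))); last first.
  move=> a aA2; rewrite -IH; apply: eq_wsum => w _ _ /=.
  have aA1 : a \notin A1 by apply: contraL aA2 => /A12.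
  by rewrite aA2 (negbTE aA1).
rewrite exchange_big; apply: eq_bigr => i _ /=.
by rewrite -big_distrr subSn // -ltnS.
Qed.

Fixpoint words (A : seq nat) (L : nat) : seq (seq nat) :=
  if L is L'.+1 then [seq a :: w | a <- A, w <- words A L'] else [:: [::]].

Lemma wsum_words A L f : wsum A L f = \sum_(w <- words A L) f w.
Proof.
elim: L f => [|L IH] f /=; first by rewrite big_seq1.
by rewrite big_allpairs_dep; apply: eq_bigr => a _; apply: IH.
Qed.

Lemma words_uniq A L : uniq A -> uniq (words A L).
Proof.
move=> uA; elim: L => [|L IH] //=.
by apply: allpairs_uniq => // -[a w] [b v] _ _ /= [-> ->].
Qed.

Lemma mem_words A L w : (w \in words A L) = (size w == L) && all (fun x => x \in A) w.
Proof.
elim: L w => [|L IH] w /=; first by rewrite inE; case: w.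
apply/allpairsP/idP => [[[a v] /= [aA vL ->]]|].
  by move: vL; rewrite IH /= aA => /andP[/eqP -> ->]; rewrite eqxx.
case: w => [|a v] //= /andP[Lw /andP[aA Av]]; exists (a, v) => /=.
by rewrite IH Av aA -(eqSS (size v)) Lw.
Qed.

Lemma size_words A L : size (words A L) = size A ^ L.
Proof. by elim: L => [|L IH] //=; rewrite size_allpairs IH expnS. Qed.

Definition pref_word L M (alpha : {ffun 'I_L -> 'I_M}) : seq nat :=
  [seq (alpha i).+1 | i <- enum 'I_L].

Lemma pref_word_perm L M :
  perm_eq (map (@pref_word L M) (enum {ffun 'I_L -> 'I_M})) (words (iota 1 M) L).
Proof.
have inj_pw : injective (@pref_word L M).
  move=> a1 a2 /eq_in_map a12; apply/ffunP => i; apply/val_inj.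
  by have [] := a12 i (mem_enum _ i).
have uniq_pw : uniq (map (@pref_word L M) (enum {ffun 'I_L -> 'I_M})).
  by rewrite map_inj_uniq ?enum_uniq.
have sub_pw : {subset map (@pref_word L M) (enum {ffun 'I_L -> 'I_M}) <=
               words (iota 1 M) L}.
  move=> w /mapP[a _ ->]; rewrite mem_words /pref_word size_map size_enum_ord eqxx /=.
  by apply/allP => x /mapP[i _ ->]; rewrite mem_iota add1n /= ltnS ltn_ord.
have size_pw : size (words (iota 1 M) L) <=
               size (map (@pref_word L M) (enum {ffun 'I_L -> 'I_M})).
  by rewrite size_words size_iota size_map -cardT card_ffun !card_ord.
have [_ mem_pw] := uniq_min_size uniq_pw sub_pw size_pw.
by apply: uniq_perm => //; apply/words_uniq/iota_uniq.
Qed.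

Lemma card_pref_word L M (Q : pred (seq nat)) :
  #|[set alpha : {ffun 'I_L -> 'I_M} | Q (pref_word alpha)]| =
  wsum (iota 1 M) L (fun w => Q w).
Proof.
rewrite wsum_words -(perm_big _ (pref_word_perm L M)) big_map.
rewrite -sum1dep_card big_mkcond -big_enum.
by apply: eq_bigr => a _; case: (Q _).
Qed.

Definition first_free (occ s : seq nat) : option nat :=
  ohead [seq x <- s | x \notin occ].

Lemma first_free_cons occ x s :
  first_free occ (x :: s) = if x \in occ then first_free occ s else Some x.
Proof. by rewrite /first_free /=; case: (x \in occ). Qed.

Lemma first_free_cat occ s1 s2 :
  first_free occ (s1 ++ s2) =
  if first_free occ s1 is Some y then Some y else first_free occ s2.
Proof. by elim: s1 => //= x s1 IH; rewrite !first_free_cons; case: (x \in occ). Qed.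

Lemma first_free_through occ s1 x s2 :
  x \notin occ -> first_free occ (s1 ++ x :: s2) = Some (odflt x (first_free occ s1)).
Proof. by move=> xf; rewrite first_free_cat first_free_cons (negbTE xf); case: first_free. Qed.

Lemma first_freeP occ s y :
  first_free occ s = Some y -> (y \in s) && (y \notin occ).
Proof.
elim: s => //= x s IH; rewrite first_free_cons in_cons.
case: ifP => [xo /IH /andP[-> ->]|xo [<-]]; first by rewrite orbT.
by rewrite eqxx xo.
Qed.

Lemma first_free_None occ s :
  (first_free occ s == None) = all (fun x => x \in occ) s.
Proof. by elim: s => //= x s IH; rewrite first_free_cons; case: ifP. Qed.

Lemma eq_first_free occ occ' s :
  (forall x, x \in s -> (x \in occ) = (x \in occ')) ->
  first_free occ s = first_free occ' s.
Proof.
elim: s => //= x s IH H; rewrite !first_free_cons H ?mem_head // IH // => y ys.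
by apply: H; rewrite in_cons ys orbT.
Qed.

Lemma mem_map_in (P : pred nat) (g : nat -> nat) occ x :
  {in P &, injective g} -> all P occ -> P x -> (g x \in map g occ) = (x \in occ).
Proof.
move=> inj_g Pocc Px; apply/mapP/idP => [[y yo /inj_g]|xo]; last by exists x.
by move=> -> //; apply: (allP Pocc).
Qed.

Lemma first_free_map (P : pred nat) g occ s :
  {in P &, injective g} -> all P occ -> all P s ->
  first_free (map g occ) (map g s) = omap g (first_free occ s).
Proof.
move=> inj_g Pocc; elim: s => //= x s IH /andP[Px Ps].
by rewrite !first_free_cons (mem_map_in inj_g Pocc Px); case: ifP => // _; apply: IH.
Qed.

Lemma first_free_shift e (occ s : seq nat) :
  first_free (map (addn e) occ) (map (addn e) s) = omap (addn e) (first_free occ s).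
Proof.
by apply: (@first_free_map predT); [move=> x y _ _ /addnI | apply/allP..].
Qed.

Lemma iota_split m x n : m <= x < m + n ->
  iota m n = iota m (x - m) ++ x :: iota x.+1 (m + n - x.+1).
Proof.
move=> mxn; have E : n = (x - m) + (m + n - x.+1).+1 by lia.
by rewrite {1}E iotaD (_ : m + (x - m) = x) //; lia.
Qed.

Lemma sum_bool_count (T : Type) (P : pred T) s : \sum_(x <- s) (P x : nat) = count P s.
Proof. by elim: s => [|x s IH]; rewrite ?big_nil ?big_cons //= IH. Qed.

Definition back_spots (a k : nat) : seq nat :=
  [seq s <- [seq a - j | j <- iota 1 k & j < a] | 1 <= s].

Lemma park_carE n k occ a :
  park_car n k occ a =
  if a \notin occ then Some a else
  if first_free occ (back_spots a k) is Some s then Some s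
  else first_free occ (iota a.+1 (n - a)).
Proof.
rewrite /park_car /first_free /back_spots; case: (a \notin occ) => //.
by case: [seq s <- _ | s \notin occ].
Qed.

Lemma filter_iota_lt c s k : [seq j <- iota s k | j < c] = iota s (minn k (c - s)).
Proof.
elim: k s => [|k IH] s /=; first by rewrite min0n.
case: ifP => H; rewrite IH.
  by have -> : minn k.+1 (c - s) = (minn k (c - s.+1)).+1 by lia.
have -> : minn k.+1 (c - s) = 0 by lia.
by have -> : minn k (c - s.+1) = 0 by lia.
Qed.

Lemma back_spotsE a k : back_spots a k = [seq a - j | j <- iota 1 (minn k (a - 1))].
Proof.
rewrite /back_spots filter_map /= filter_iota_lt.
congr map; apply/all_filterP/allP => j; rewrite mem_iota /=; lia.
Qed.

Lemma mem_back_spots a k x : (x \in back_spots a k) = (0 < x < a) && (a - x <= k).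
Proof.
rewrite back_spotsE; apply/mapP/idP => [[j]|H].
  by rewrite mem_iota => Hj ->; lia.
by exists (a - x); [rewrite mem_iota|]; lia.
Qed.

Lemma park_car_range n k occ a s :
  0 < a <= n -> park_car n k occ a = Some s -> (0 < s <= n) && (s \notin occ).
Proof.
move=> Ha; rewrite park_carE; case: ifP => [H [<-]|_]; first by rewrite Ha.
case E: first_free => [y|].
  by move=> [<-]; move/first_freeP: E => /andP[]; rewrite mem_back_spots => H1 ->; lia.
by move/first_freeP => /andP[]; rewrite mem_iota => H1 ->; lia.
Qed.

Lemma park_all_rcons n k occ w a :
  park_all n k occ (rcons w a) =
  if park_all n k occ w is Some o then
    (if park_car n k o a is Some s then Some (s :: o) else None)
  else None.
Proof.
elim: w occ => [|x w IH] occ /=; first by case: park_car.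
by case: park_car => // s; rewrite IH.
Qed.

Lemma park_all_spots n k occ w o :
  uniq occ -> all (fun x => 0 < x <= n) w -> park_all n k occ w = Some o ->
  [/\ uniq o, size o = size w + size occ &
      forall x, x \in o -> (x \in occ) || (0 < x <= n)].
Proof.
elim: w occ => [|a w IH] occ /= Uocc; first by move=> _ [<-]; split=> // x ->.
move=> /andP[Ha Hw]; case E: park_car => [s|] // R.
have /andP[Hs socc] := park_car_range Ha E.
have Us : uniq (s :: occ) by rewrite /= socc Uocc.
have [U Sz Hx] := IH (s :: occ) Us Hw R.
split=> //; first by rewrite Sz /= addnS.
move=> x /Hx; rewrite in_cons; case/orP => [/orP[/eqP->|->]|->]; rewrite ?Hs ?orbT //.
Qed.

Lemma park_all_mono n k occ w o x :
  x \in occ -> park_all n k occ w = Some o -> x \in o.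
Proof.
elim: w occ => [|a w IH] occ /= xo; first by case=> <-.
by case: park_car => // s; apply: IH; rewrite in_cons xo orbT.
Qed.

Lemma park_all_pref n k occ w o a :
  a \in w -> park_all n k occ w = Some o -> a \in o.
Proof.
elim: w occ => [|b w IH] occ //=; rewrite in_cons => /orP[/eqP<-|aw].
  case E: park_car => [s|] // R.
  case ao: (a \in occ); first by apply: park_all_mono R; rewrite in_cons ao orbT.
  by move: E; rewrite park_carE ao => -[->]; apply: park_all_mono R; rewrite mem_head.
by case: park_car => // s; apply: IH.
Qed.

Definition leaves_empty n k e occ w : bool :=
  if park_all n k occ w is Some o then e \notin o else false.

Lemma leaves_empty_cons n k e occ a w :
  leaves_empty n k e occ (a :: w) =
  if park_car n k occ a is Some s then leaves_empty n k e (s :: occ) w else false.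
Proof. by rewrite /leaves_empty /=; case: park_car. Qed.

Lemma leaves_empty_occ n k e occ w : e \in occ -> leaves_empty n k e occ w = false.
Proof.
rewrite /leaves_empty => eo; case E: park_all => [o|] //.
by rewrite (park_all_mono eo E).
Qed.

Lemma leaves_empty_head n k e (occ w : seq nat) : leaves_empty n k e (e :: occ) w = false.
Proof. by rewrite leaves_empty_occ // mem_head. Qed.

Lemma count_notin_iota s n (o : seq nat) :
  uniq o -> (forall x, x \in o -> s <= x < s + n) ->
  count (fun x => x \notin o) (iota s n) = n - size o.
Proof.
move=> Uo Ho.
have Hp : perm_eq [seq x <- iota s n | x \in o] o.
  apply: uniq_perm; rewrite ?filter_uniq ?iota_uniq //.
  move=> x; rewrite mem_filter mem_iota; apply/andP/idP => [[]//|xo].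
  by split=> //; apply: Ho.
have cnt := count_predC (fun x => x \in o) (iota s n).
by rewrite -size_filter (perm_size Hp) size_iota in cnt; rewrite -[in RHS]cnt addKn.
Qed.

Lemma one_empty_spot n (o : seq nat) :
  uniq o -> size o = n -> (forall x, x \in o -> 0 < x <= n.+1) ->
  exists2 e0, 0 < e0 <= n.+1 & forall x, (x \in o) = (0 < x <= n.+1) && (x != e0).
Proof.
move=> Uo So Ho.
have cnt := @count_notin_iota 1 n.+1 o Uo Ho; rewrite So subSnn -size_filter in cnt.
have mF x : (x \in [seq x <- iota 1 n.+1 | x \notin o]) = (0 < x <= n.+1) && (x \notin o).
  by rewrite mem_filter mem_iota andbC add1n ltnS.
case EF: [seq x <- _ | _] cnt mF => [|e0 [|]] // _ mF.
have /andP[He0 _] : (0 < e0 <= n.+1) && (e0 \notin o) by rewrite -mF mem_head.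
exists e0 => // x; have := mF x; rewrite inE.
case xo: (x \in o); rewrite /= ?andbF ?andbT; [move=> -> | move=> <-].
  by rewrite (Ho x xo).
by rewrite andbN.
Qed.

Lemma count_le_iota c n : count (fun a => a <= c) (iota 1 n) = minn c n.
Proof.
elim: n => [|n IH]; first by rewrite minn0.
by rewrite -(addn1 n) iotaD count_cat IH /= add1n addn0; case: leqP; lia.
Qed.

(* When only spot e0 of [1, n] is empty, a car preferring a parks iff
   a <= e0 + k: either e0 is among its k back spots, or it lies ahead. *)
Lemma last_car n k o e0 a :
  (forall x, (x \in o) = (0 < x <= n) && (x != e0)) -> 0 < e0 <= n -> 0 < a <= n ->
  (park_car n k o a != None) = (a <= e0 + k).
Proof.
move=> Ho He Ha; rewrite park_carE Ho.
case: (eqVneq a e0) => [->|ne]; first by rewrite /= andbF /=; lia.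
rewrite Ha /=.
have Ho' x : x \notin o -> 0 < x <= n -> x = e0.
  by rewrite Ho => xo Hx; move: xo; rewrite Hx negbK => /eqP.
case Eb: first_free => [y|].
  move/first_freeP: Eb; rewrite mem_back_spots => /andP[Hy yf].
  have ye : y = e0 by apply: (Ho' y yf); lia.
  by subst y; rewrite /=; symmetry; lia.
have e0_back : ~~ ((0 < e0 < a) && (a - e0 <= k)).
  apply/negP => Hb; move/eqP: Eb; rewrite first_free_None => /allP /(_ e0).
  by rewrite mem_back_spots Hb Ho eqxx andbF => /(_ isT).
apply/idP/idP.
  case Ef: first_free => [y|] // _.
  move/first_freeP: Ef; rewrite mem_iota => /andP[Hy yf].
  have ye : y = e0 by apply: (Ho' y yf); lia.
  by rewrite ye in Hy; lia.
move=> a_le; apply/eqP => /eqP; rewrite first_free_None => /allP /(_ e0).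
rewrite mem_iota Ho eqxx andbF.
have -> : a.+1 <= e0 < a.+1 + (n - a) by move: e0_back; rewrite negb_and; lia.
by move/(_ isT).
Qed.

Lemma last_car_count n k b : all (fun x => 0 < x <= n.+1) b -> size b = n ->
  \sum_(a <- iota 1 n.+1) (park_all n.+1 k [::] (rcons b a) != None : nat) =
  \sum_(e <- iota 1 n.+1) leaves_empty n.+1 k e [::] b * minn (e + k) n.+1.
Proof.
move=> Hb Sb; rewrite /leaves_empty.
under eq_bigr do rewrite park_all_rcons.
case E: park_all => [o|]; last by rewrite !big1.
have [Uo So Ro] := park_all_spots (isT : uniq [::]) Hb E.
rewrite Sb addn0 in So.
have [e0 He0 Ho] := one_empty_spot Uo So Ro.
rewrite (eq_big_seq (fun a => (a <= e0 + k) : nat)); last first.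
  move=> a; rewrite mem_iota => Ha.
  by rewrite -(last_car k Ho) //; case: park_car.
rewrite sum_bool_count count_le_iota.
rewrite (bigD1_seq e0) ?iota_uniq ?mem_iota //.
rewrite Ho eqxx andbF mul1n big1_seq => [|e /andP[ne]]; first by rewrite /= addn0.
by rewrite mem_iota Ho ne andbT add1n ltnS => ->.
Qed.

(* While spot e is empty, a car preferring a spot left of e only sees the
   spots left of e (it parks at e at the latest) ... *)
Lemma park_car_left n k e occ occ' a :
  a < e -> e <= n -> e \notin occ -> e \notin occ' ->
  (forall x, x < e -> (x \in occ) = (x \in occ')) ->
  park_car n k occ a = park_car n k occ' a.
Proof.
move=> ae en eo eo' same; rewrite !park_carE same //.
rewrite (@eq_first_free occ occ' (back_spots a k)); last first.
  by move=> x; rewrite mem_back_spots => Hx; apply: same; lia.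
case: first_free => //.
rewrite (iota_split (x := e)); last by lia.
rewrite !first_free_through //; case: ifP => // _; do 2 f_equal.
by apply: eq_first_free => x; rewrite mem_iota => Hx; apply: same; lia.
Qed.

(* ... and a car preferring a spot right of e only sees the spots right of
   e (it looks back at most down to e). *)
Lemma park_car_right n k e occ occ' a :
  e < a -> e \notin occ -> e \notin occ' ->
  (forall x, e < x -> (x \in occ) = (x \in occ')) ->
  park_car n k occ a = park_car n k occ' a.
Proof.
move=> ea eo eo' same; rewrite !park_carE same //.
have -> : first_free occ (back_spots a k) = first_free occ' (back_spots a k).
  rewrite back_spotsE; case: (leqP (a - e) (minn k (a - 1))) => e_back.
    rewrite (iota_split (x := a - e)); last by lia.
    rewrite map_cat /= (_ : a - (a - e) = e); last by lia.
    rewrite !first_free_through //; do 2 f_equal; apply: eq_first_free => x.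
    by case/mapP => j; rewrite mem_iota => Hj ->; apply: same; lia.
  apply: eq_first_free => x.
  by case/mapP => j; rewrite mem_iota => Hj ->; apply: same; lia.
case: ifP => // _; case: first_free => //; apply: eq_first_free => x.
by rewrite mem_iota => Hx; apply: same; lia.
Qed.

(* Consequently a car preferring a spot left of the empty spot e parks at
   most at e, and one preferring a spot right of e parks at least at e: it
   parks as if all spots beyond e (resp. before e) were occupied. *)
Lemma park_car_le n k e occ a s :
  0 < a < e -> e <= n -> e \notin occ -> park_car n k occ a = Some s -> s <= e.
Proof.
move=> ae en eo.
rewrite (@park_car_left n k e occ (occ ++ iota e.+1 n) a); first last.
- by move=> x xe; rewrite mem_cat mem_iota; case: (x \in occ) => //=; lia.
- by rewrite mem_cat mem_iota negb_or eo /=; lia.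
- by [].
- by [].
- by case/andP: ae.
move/park_car_range; rewrite (_ : 0 < a <= n); last by lia.
by move=> /(_ isT) /andP[Hs]; rewrite mem_cat mem_iota negb_or => /andP[_]; lia.
Qed.

Lemma park_car_ge n k e occ a s :
  e < a <= n -> e \notin occ -> park_car n k occ a = Some s -> e <= s.
Proof.
move=> ae eo.
rewrite (@park_car_right n k e occ (occ ++ iota 0 e) a); first last.
- by move=> x xe; rewrite mem_cat mem_iota; case: (x \in occ) => //=; lia.
- by rewrite mem_cat mem_iota negb_or eo /=; lia.
- by [].
- by case/andP: ae.
move/park_car_range; rewrite (_ : 0 < a <= n); last by lia.
by move=> /(_ isT) /andP[Hs]; rewrite mem_cat mem_iota negb_or => /andP[_]; lia.
Qed.

Lemma leaves_empty_split n k e o1 o2 occ w :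
  0 < e <= n -> all (fun x => x < e) o1 -> all (fun x => e < x) o2 ->
  occ =i o1 ++ o2 -> all (fun x => (0 < x <= n) && (x != e)) w ->
  leaves_empty n k e occ w =
  leaves_empty n k e o1 [seq x <- w | x < e] && leaves_empty n k e o2 [seq x <- w | e < x].
Proof.
move=> He; elim: w o1 o2 occ => [|a w IH] o1 o2 occ lt1 gt2 occE.
  have eo1 : e \notin o1 by apply/negP => /(allP lt1); rewrite ltnn.
  have eo2 : e \notin o2 by apply/negP => /(allP gt2); rewrite ltnn.
  by move=> _; rewrite /leaves_empty /= occE mem_cat negb_or eo1 eo2.
move=> /= /andP[/andP[Ha ae] Hw].
have eo1 : e \notin o1 by apply/negP => /(allP lt1); rewrite ltnn.
have eo2 : e \notin o2 by apply/negP => /(allP gt2); rewrite ltnn.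
have eo : e \notin occ by rewrite occE mem_cat negb_or eo1 eo2.
case: (ltngtP a e) => [a_lt|a_gt|a_eq]; last by rewrite a_eq eqxx in ae.
- (* the car parks left of e, as it would with the left cars alone *)
  rewrite /= !leaves_empty_cons (@park_car_left n k e occ o1) //; first last.
  + move=> x xe; rewrite occE mem_cat.
    have -> : (x \in o2) = false by apply/negP => /(allP gt2); lia.
    by rewrite orbF.
  + by case/andP: He.
  case E: park_car => [s|] //.
  have s_le : s <= e by apply: (@park_car_le n k e o1 a s) => //; lia.
  case: (ltngtP s e) => [s_lt|s_gt|->]; [|lia|by rewrite !leaves_empty_head].
  apply: IH => //; first by rewrite /= s_lt lt1.
  by move=> x; rewrite !in_cons occE mem_cat orbA.
- (* the car parks right of e, as it would with the right cars alone *)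
  rewrite /= !leaves_empty_cons (@park_car_right n k e occ o2) //; last first.
    move=> x xe; rewrite occE mem_cat.
    by have -> : (x \in o1) = false by apply/negP => /(allP lt1); lia.
  case E: park_car => [s|]; last by rewrite andbF.
  have s_ge : e <= s by apply: (@park_car_ge n k e o2 a s) => //; lia.
  case: (ltngtP s e) => [s_lt|s_gt|->]; [lia| |by rewrite !leaves_empty_head andbF].
  apply: IH => //; first by rewrite /= s_gt gt2.
  by move=> x; rewrite !in_cons occE !mem_cat !in_cons; case: (x == s); rewrite ?orbT.
Qed.

Lemma park_car_trunc n k e occ a :
  a < e -> e <= n -> e \notin occ ->
  park_car n k occ a = if park_car e.-1 k occ a is Some s then Some s else Some e.
Proof.
move=> ae en eo; rewrite !park_carE; case: ifP => // _.
case: first_free => //.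
rewrite (iota_split (x := e)); last by lia.
rewrite first_free_through // (_ : e - a.+1 = e.-1 - a); last by lia.
by case: first_free.
Qed.

Lemma leaves_empty_left n k e occ u :
  0 < e <= n -> e \notin occ -> all (fun x => 0 < x < e) u ->
  leaves_empty n k e occ u = (park_all e.-1 k occ u != None).
Proof.
move=> He; elim: u occ => [|a u IH] occ eo; first by rewrite /leaves_empty /= eo.
move=> /= /andP[Ha Hu]; rewrite leaves_empty_cons (@park_car_trunc n k e); first last.
- by [].
- by case/andP: He.
- by case/andP: Ha.
case E: park_car => [s|]; last by rewrite leaves_empty_head.
have Ha' : 0 < a <= e.-1 by lia.
have /andP[Hs _] := park_car_range Ha' E.
by apply: IH => //; rewrite in_cons negb_or eo andbT; apply/eqP => se; lia.
Qed.

(* k-Naples parking on a circle of spots 0, 1, ..., m: a car whose preferred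
   spot a is taken looks back at a-1, ..., a-k (mod m+1), then drives forward
   through a+1, ..., a+m (mod m+1). *)
Definition cback (m k a : nat) : seq nat := [seq (a + m.+1 * k - j) %% m.+1 | j <- iota 1 k].
Definition cfwd (m a : nat) : seq nat := [seq (a + j) %% m.+1 | j <- iota 1 m].

Definition cpark (m k : nat) (occ : seq nat) (a : nat) : option nat :=
  if a \notin occ then Some a else
  if first_free occ (cback m k a) is Some s then Some s else first_free occ (cfwd m a).

Fixpoint crun (m k : nat) (occ : seq nat) (w : seq nat) : option (seq nat) :=
  if w is a :: w' then
    if cpark m k occ a is Some s then crun m k (s :: occ) w' else None
  else Some occ.

Definition cleaves_empty m k r occ w : bool :=
  if crun m k occ w is Some o then r \notin o else false.

Lemma cleaves_empty_cons m k r occ a w :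
  cleaves_empty m k r occ (a :: w) =
  if cpark m k occ a is Some s then cleaves_empty m k r (s :: occ) w else false.
Proof. by rewrite /cleaves_empty /=; case: cpark. Qed.

Lemma cpark_range m k occ a s :
  a < m.+1 -> cpark m k occ a = Some s -> (s < m.+1) && (s \notin occ).
Proof.
rewrite /cpark => Ha; case: ifP => [H [<-]|_]; first by rewrite Ha.
case E: first_free => [y|].
  by move=> [<-]; move/first_freeP: E => /andP[/mapP[j _ ->] ->]; rewrite ltn_pmod.
by move/first_freeP => /andP[/mapP[j _ ->] ->]; rewrite ltn_pmod.
Qed.

Lemma crun_spots m k occ w o :
  uniq occ -> all (fun x => x < m.+1) w -> crun m k occ w = Some o ->
  [/\ uniq o, size o = size w + size occ &
      forall x, x \in o -> (x \in occ) || (x < m.+1)].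
Proof.
elim: w occ => [|a w IH] occ /= Uocc; first by move=> _ [<-]; split=> // x ->.
move=> /andP[Ha Hw]; case E: cpark => [s|] // R.
have /andP[Hs socc] := cpark_range Ha E.
have Us : uniq (s :: occ) by rewrite /= socc Uocc.
have [U Sz Hx] := IH (s :: occ) Us Hw R.
split=> //; first by rewrite Sz /= addnS.
move=> x /Hx; rewrite in_cons; case/orP => [/orP[/eqP->|->]|->]; rewrite ?Hs ?orbT //.
Qed.

Lemma crun_mono m k occ w o x :
  x \in occ -> crun m k occ w = Some o -> x \in o.
Proof.
elim: w occ => [|a w IH] occ /= xo; first by case=> <-.
by case: cpark => // s; apply: IH; rewrite in_cons xo orbT.
Qed.

Lemma crun_pref m k occ w o a :
  a \in w -> crun m k occ w = Some o -> a \in o.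
Proof.
elim: w occ => [|b w IH] occ //=; rewrite in_cons => /orP[/eqP<-|aw].
  case E: cpark => [s|] // R.
  case ao: (a \in occ); first by apply: crun_mono R; rewrite in_cons ao orbT.
  by move: E; rewrite /cpark ao => -[->]; apply: crun_mono R; rewrite mem_head.
by case: cpark => // s; apply: IH.
Qed.

Lemma cleaves_empty_head m k r (occ w : seq nat) : cleaves_empty m k r (r :: occ) w = false.
Proof.
rewrite /cleaves_empty; case E: crun => [o|] //.
by rewrite (crun_mono (mem_head r occ) E).
Qed.

(* On the circle a car always parks while some spot is free: its forward
   scan visits every other spot. *)
Lemma cpark_total m k (occ : seq nat) a :
  uniq occ -> size occ < m.+1 -> a < m.+1 -> cpark m k occ a != None.
Proof.
move=> Uo So Ha; rewrite /cpark; case: ifP => // ao.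
case: first_free => //.
apply/eqP => /eqP; rewrite first_free_None => /allP fwd_occ.
have circle_occ : {subset iota 0 m.+1 <= occ}.
  move=> x; rewrite mem_iota add0n => Hx.
  case: (ltngtP a x) => [ax|xa|<-]; last by rewrite (negbFE ao).
  - apply: fwd_occ; apply/mapP; exists (x - a); first by rewrite mem_iota; lia.
    by rewrite (_ : a + (x - a) = x) ?modn_small //; lia.
  - apply: fwd_occ; apply/mapP; exists (x + m.+1 - a); first by rewrite mem_iota; lia.
    rewrite (_ : a + (x + m.+1 - a) = x + m.+1); last by lia.
    by rewrite modnDr modn_small.
have := uniq_leq_size (iota_uniq 0 m.+1) circle_occ; rewrite size_iota => H.
by rewrite ltnNge H in So.
Qed.

Lemma crun_total m k (occ w : seq nat) :
  uniq occ -> all (fun x => x < m.+1) w ->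
  size occ + size w <= m -> crun m k occ w != None.
Proof.
elim: w occ => [|a w IH] occ //= Uo /andP[Ha Hw] Sz.
have So : size occ < m.+1 by lia.
have := cpark_total k Uo So Ha.
case E: cpark => [s|] // _; have /andP[Hs so] := cpark_range Ha E.
by apply: IH => /=; [rewrite so | | lia].
Qed.

Definition turn (m r x : nat) : nat := (x + r) %% m.+1.

Lemma turn_inj m r : {in (fun x => x < m.+1) &, injective (turn m r)}.
Proof. by move=> x y Hx Hy /eqP; rewrite /turn eqn_modDr !modn_small // => /eqP. Qed.

Lemma cback_turn m k r a : cback m k (turn m r a) = map (turn m r) (cback m k a).
Proof.
rewrite /cback -map_comp; apply/eq_in_map => j; rewrite mem_iota => Hj /=.
have hj : j <= m.+1 * k by rewrite mulSn; lia.
by rewrite /turn -addnBA // modnDml modnDml; congr (_ %% _); lia.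
Qed.

Lemma cfwd_turn m r a : cfwd m (turn m r a) = map (turn m r) (cfwd m a).
Proof.
rewrite /cfwd -map_comp; apply/eq_in_map => j _ /=.
by rewrite /turn modnDml modnDml; congr (_ %% _); lia.
Qed.

Lemma cback_range m k a : all (fun x => x < m.+1) (cback m k a).
Proof. by apply/allP => x /mapP[j _ ->]; rewrite ltn_pmod. Qed.

Lemma cfwd_range m a : all (fun x => x < m.+1) (cfwd m a).
Proof. by apply/allP => x /mapP[j _ ->]; rewrite ltn_pmod. Qed.

Lemma cpark_turn m k r (occ : seq nat) a :
  all (fun x => x < m.+1) occ -> a < m.+1 ->
  cpark m k (map (turn m r) occ) (turn m r a) = omap (turn m r) (cpark m k occ a).
Proof.
move=> Ao Ha; rewrite /cpark (mem_map_in (@turn_inj m r) Ao Ha).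
case: ifP => // _.
rewrite cback_turn (first_free_map (@turn_inj m r) Ao (cback_range _ _ _)).
case: first_free => //=.
by rewrite cfwd_turn (first_free_map (@turn_inj m r) Ao (cfwd_range _ _)).
Qed.

Lemma crun_turn m k r (occ w : seq nat) :
  all (fun x => x < m.+1) occ -> all (fun x => x < m.+1) w ->
  crun m k (map (turn m r) occ) (map (turn m r) w) = omap (map (turn m r)) (crun m k occ w).
Proof.
elim: w occ => [|a w IH] occ //= Ao /andP[Ha Hw].
rewrite cpark_turn //; case E: cpark => [s|] //=.
have /andP[Hs _] := cpark_range Ha E.
by rewrite -(IH (s :: occ)) //= Hs.
Qed.

Lemma cleaves_empty_turn m k r (w : seq nat) :
  r < m.+1 -> all (fun x => x < m.+1) w ->
  cleaves_empty m k r [::] (map (turn m r) w) = cleaves_empty m k 0 [::] w.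
Proof.
move=> Hr Hw; rewrite /cleaves_empty.
have := crun_turn k r (isT : all (fun x => x < m.+1) [::]) Hw; rewrite /= => ->.
case E: crun => [o|] //=.
have [_ _ Ho] := crun_spots (isT : uniq [::]) Hw E.
have Ao : all (fun x => x < m.+1) o by apply/allP => x /Ho.
have turn0 : turn m r 0 = r by rewrite /turn add0n modn_small.
by rewrite -{1}turn0 (mem_map_in (@turn_inj m r) Ao).
Qed.

Lemma perm_turn m r : perm_eq (map (turn m r) (iota 0 m.+1)) (iota 0 m.+1).
Proof.
have U : uniq (map (turn m r) (iota 0 m.+1)).
  rewrite map_inj_in_uniq ?iota_uniq // => x y; rewrite !mem_iota /= => Hx Hy.
  exact: (turn_inj Hx Hy).
have S : {subset map (turn m r) (iota 0 m.+1) <= iota 0 m.+1}.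
  by move=> x /mapP[y _ ->]; rewrite mem_iota add0n /turn ltn_pmod.
have [_ E] := uniq_min_size U S (eq_leq (esym (size_map _ _))).
by apply: uniq_perm => //; apply: iota_uniq.
Qed.

Lemma cleaves_empty_sum m k (w : seq nat) : all (fun x => x < m.+1) w -> size w = m ->
  \sum_(r <- iota 0 m.+1) (cleaves_empty m k r [::] w : nat) = 1.
Proof.
move=> Hw Sw.
have := crun_total k (isT : uniq [::]) Hw (eq_leq Sw).
case E: crun => [o|] // _.
have [Uo So Ho] := crun_spots (isT : uniq [::]) Hw E.
rewrite /= Sw addn0 in So.
rewrite (eq_bigr (fun r => (r \notin o) : nat)); last by move=> r _; rewrite /cleaves_empty E.
by rewrite sum_bool_count count_notin_iota // So subSnn.
Qed.

(* Pollak's argument: by rotation invariance each of the m+1 spots is left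
   empty by the same number of words, and the (m+1)^m words are shared
   among them; words leaving 0 empty never prefer 0. *)
Lemma circular_count m k : wsum (iota 1 m) m (cleaves_empty m k 0 [::]) = m.+1 ^ m.-1.
Proof.
set N := wsum (iota 0 m.+1) m (cleaves_empty m k 0 [::]).
have in_circle w : all (fun x => x \in iota 0 m.+1) w -> all (fun x => x < m.+1) w.
  by move=> Hw; apply/allP => x /(allP Hw); rewrite mem_iota.
have same_r r : r < m.+1 -> wsum (iota 0 m.+1) m (cleaves_empty m k r [::]) = N.
  move=> Hr; rewrite -(perm_wsum _ _ (perm_turn m r)) wsum_map.
  by apply: eq_wsum => w Hw _; rewrite cleaves_empty_turn // in_circle.
have total : m.+1 ^ m = m.+1 * N.
  rewrite -{1}(size_iota 0 m.+1) -wsum1.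
  rewrite (eq_wsum (g := fun w => \sum_(r <- iota 0 m.+1) (cleaves_empty m k r [::] w : nat)));
    last by move=> w Hw Sw; rewrite cleaves_empty_sum // in_circle.
  rewrite wsum_sum (eq_big_seq (fun _ => N)); last by move=> r; rewrite mem_iota => /same_r.
  by rewrite big_const_seq count_predT size_iota iter_addn_0 mulnC.
have no_zero : N = wsum (iota 1 m) m (cleaves_empty m k 0 [::]).
  rewrite /N (@wsum_filter (fun x => x != 0)).
    by congr wsum; rewrite /=; apply/all_filterP/allP => x; rewrite mem_iota; lia.
  move=> w _ _; rewrite /cleaves_empty; case E: crun => [o|] //.
  case: (boolP (0 \in o)) => // o0 _.
  by apply/allP => x xw; apply: contraNneq o0 => x0; rewrite -x0 (crun_pref xw E).
rewrite -no_zero; case: m {same_r in_circle no_zero} N total => [|m] N; first by rewrite mul1n.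
by rewrite expnS => /eqP; rewrite eqn_pmul2l // => /eqP.
Qed.

Lemma circular_count_long m k L : m < L -> wsum (iota 1 m) L (cleaves_empty m k 0 [::]) = 0.
Proof.
move=> HL; apply: wsum_eq0 => w Hw Sw; rewrite /cleaves_empty.
case E: crun => [o|] //.
have Hw' : all (fun x => x < m.+1) w.
  by apply/allP => x /(allP Hw); rewrite mem_iota; lia.
have [Uo So Ho] := crun_spots (isT : uniq [::]) Hw' E.
case: (boolP (0 \in o)) => // o0; exfalso.
have : {subset o <= iota 1 m}.
  move=> x xo; rewrite mem_iota; have := Ho x xo; rewrite /=.
  by case: (eqVneq x 0) => [x0|]; [rewrite -x0 xo in o0 | lia].
move/(uniq_leq_size Uo); rewrite size_iota So /= addn0 Sw.
by rewrite leqNgt HL.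
Qed.

Definition avoid (r : nat) (x : option nat) : option nat :=
  if x is Some s then (if s == r then None else Some s) else None.

Lemma avoid_Some r x s : avoid r x = Some s -> x = Some s /\ s != r.
Proof. by case: x => //= t; case: eqP => // /eqP tr [<-]. Qed.

Lemma avoid_None r x : avoid r x = None -> x = None \/ x = Some r.
Proof. by case: x => [t|]; [rewrite /=; case: eqP => [->|]|]; auto. Qed.

Lemma mem_shift e (occ : seq nat) x : (e + x \in map (addn e) occ) = (x \in occ).
Proof. by rewrite mem_map //; apply: addnI. Qed.

Lemma cfwd_split m a : 0 < a <= m ->
  cfwd m a = iota a.+1 (m - a) ++ 0 :: [seq (a + j) %% m.+1 | j <- iota (m - a).+2 (a - 1)].
Proof.
move=> Ha; rewrite /cfwd (iota_split (x := (m - a).+1)); last by lia.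
rewrite map_cat /=; congr (_ ++ _ :: _).
- rewrite (_ : (m - a).+1 - 1 = m - a); last by lia.
  have -> : iota a.+1 (m - a) = map (addn a) (iota 1 (m - a)) by rewrite -iotaDl addn1.
  apply/eq_in_map => j.
  by rewrite mem_iota => Hj /=; rewrite modn_small; lia.
- by rewrite (_ : a + (m - a).+1 = m.+1) ?modnn //; lia.
- by congr map; congr iota; lia.
Qed.

Lemma cback_small m k a : 0 < a <= m -> k < a ->
  cback m k a = [seq a - j | j <- iota 1 k].
Proof.
move=> Ha Hk; apply/eq_in_map => j; rewrite mem_iota => Hj.
rewrite (_ : a + m.+1 * k - j = k * m.+1 + (a - j)); last by nia.
by rewrite modnMDl modn_small //; lia.
Qed.

Lemma cback_big m k a : 0 < a <= m -> a <= k ->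
  cback m k a = [seq a - j | j <- iota 1 (a - 1)] ++
                0 :: [seq (a + m.+1 * k - j) %% m.+1 | j <- iota a.+1 (1 + k - a.+1)].
Proof.
move=> Ha Hk; rewrite /cback (iota_split (x := a)); last by lia.
rewrite map_cat /=; congr (_ ++ _ :: _); last by rewrite addKn modnMr.
apply/eq_in_map => j; rewrite mem_iota => Hj.
rewrite (_ : a + m.+1 * k - j = k * m.+1 + (a - j)); last by nia.
by rewrite modnMDl modn_small //; lia.
Qed.

Lemma back_spots_shift_small e k a : 0 < e -> 0 < a -> k < a ->
  back_spots (e + a) k = map (addn e) [seq a - j | j <- iota 1 k].
Proof.
move=> He Ha Hk; rewrite back_spotsE (_ : minn k (e + a - 1) = k); last by lia.
by rewrite -map_comp; apply/eq_in_map => j; rewrite mem_iota => Hj /=; lia.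
Qed.

Lemma back_spots_shift_big e k a : 0 < e -> 0 < a -> a <= k ->
  exists rest, back_spots (e + a) k =
     map (addn e) [seq a - j | j <- iota 1 (a - 1)] ++ e :: rest.
Proof.
move=> He Ha Hk; rewrite back_spotsE (iota_split (x := a)); last by lia.
rewrite map_cat /=; eexists; congr (_ ++ _ :: _); last by lia.
by rewrite -map_comp; apply/eq_in_map => j; rewrite mem_iota => Hj /=; lia.
Qed.

(* One car right of an empty spot e behaves as on the circle obtained by
   gluing the end of the line to e (spot e + t becomes t, e becomes 0):
   apart from ending on e, respectively 0, both cars park on matching spots. *)
Lemma line_circle_car m k e (occ : seq nat) a : 0 < e -> 0 < a <= m -> 0 \notin occ ->
  avoid e (park_car (e + m) k (map (addn e) occ) (e + a)) =
  omap (addn e) (avoid 0 (cpark m k occ a)).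
Proof.
move=> He Ha o0; rewrite park_carE /cpark mem_shift.
have avoid_shift t : 0 < t -> avoid e (Some (e + t)) = omap (addn e) (avoid 0 (Some t)).
  by move=> Ht /=; do 2 case: eqP => //; lia.
case: ifP => ao; first by apply: avoid_shift; case/andP: Ha.
have eo : e \notin map (addn e) occ by rewrite -{1}(addn0 e) mem_shift.
case: (ltnP k a) => Hk.
  rewrite (cback_small Ha Hk) (@back_spots_shift_small e k a He _ Hk); last by lia.
  rewrite first_free_shift.
  case Eb: (first_free occ _) => [t|] /=.
    move/first_freeP: Eb => /andP[/mapP[j]]; rewrite mem_iota => Hj -> _.
    by rewrite -avoid_shift //; lia.
  rewrite (cfwd_split Ha) first_free_through //.
  rewrite subnDl -addnS iotaDl first_free_shift.
  case E2: first_free => [t|] //=.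
  move/first_freeP: E2 => /andP[]; rewrite mem_iota => Ht _.
  by rewrite -avoid_shift //; lia.
have Ha0 : 0 < a by case/andP: Ha.
have [rest ->] := @back_spots_shift_big e k a He Ha0 Hk.
rewrite (cback_big Ha Hk) !first_free_through // first_free_shift.
case Eb: (first_free occ _) => [t|] /=; last by rewrite !eqxx.
move/first_freeP: Eb => /andP[/mapP[j]]; rewrite mem_iota => Hj -> _.
by rewrite -avoid_shift //; lia.
Qed.

Lemma line_circle_run m k e (occ w : seq nat) : 0 < e -> 0 \notin occ ->
  all (fun x => 0 < x <= m) w ->
  leaves_empty (e + m) k e (map (addn e) occ) (map (addn e) w) = cleaves_empty m k 0 occ w.
Proof.
elim: w occ => [|a w IH] occ He o0.
  by move=> _; rewrite /leaves_empty /cleaves_empty /= -{1}(addn0 e) mem_shift.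
move=> /= /andP[Ha Hw]; rewrite leaves_empty_cons cleaves_empty_cons.
have := line_circle_car k He Ha o0.
case Ec: (avoid 0 (cpark m k occ a)) => [t|] /= Ep.
  have [-> t0] := avoid_Some Ec; have [-> _] := avoid_Some Ep.
  by rewrite -map_cons IH // in_cons negb_or eq_sym t0.
have [-> | ->] := avoid_None Ep; last rewrite leaves_empty_head;
  by case: (avoid_None Ec) => ->; rewrite ?cleaves_empty_head.
Qed.

Lemma card_PF M k :
  #|PF M k| = wsum (iota 1 M) M (fun u => park_all M k [::] u != None).
Proof. exact: (card_pref_word M M (fun u => park_all M k [::] u != None)). Qed.

Lemma wsum_park_all_long M k i : M < i ->
  wsum (iota 1 M) i (fun u => park_all M k [::] u != None) = 0.
Proof.
move=> Hi; apply: wsum_eq0 => w Hw Sw.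
case E: park_all => [o|] //.
have Hw' : all (fun x => 0 < x <= M) w.
  by apply/allP => x /(allP Hw); rewrite mem_iota; lia.
have [Uo So Ho] := park_all_spots (isT : uniq [::]) Hw' E.
have : {subset o <= iota 1 M} by move=> x /Ho; rewrite mem_iota /=; lia.
move/(uniq_leq_size Uo); rewrite size_iota So /= addn0 Sw.
by rewrite leqNgt Hi.
Qed.

Lemma wsum_right_block m k e L : 0 < e ->
  wsum (iota e.+1 m) L (leaves_empty (e + m) k e [::]) =
  wsum (iota 1 m) L (cleaves_empty m k 0 [::]).
Proof.
move=> He; have -> : iota e.+1 m = map (addn e) (iota 1 m) by rewrite -iotaDl addn1.
rewrite wsum_map; apply: eq_wsum => w Hw _.
rewrite -(@line_circle_run m k e [::] w He) //.
by apply/allP => x /(allP Hw); rewrite mem_iota; lia.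
Qed.

Lemma filter_neq_iota N e : 0 < e <= N ->
  [seq x <- iota 1 N | x != e] = iota 1 e.-1 ++ iota e.+1 (N - e).
Proof.
move=> He; rewrite (iota_split (x := e)); last by lia.
rewrite filter_cat /= eqxx /=.
have -> : e - 1 = e.-1 by lia.
have -> : 1 + N - e.+1 = N - e by lia.
by congr (_ ++ _); apply/all_filterP/allP => x; rewrite mem_iota; lia.
Qed.

Lemma empty_spot_shuffle n k e : 0 < e <= n.+1 ->
  wsum (iota 1 n.+1) n (leaves_empty n.+1 k e [::]) =
  \sum_(i < n.+1) 'C(n, i) *
     wsum (iota 1 e.-1) i (fun u => park_all e.-1 k [::] u != None) *
     wsum (iota 1 (n.+1 - e)) (n - i) (cleaves_empty (n.+1 - e) k 0 [::]).
Proof.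
move=> He; have He0 : 0 < e by case/andP: He.
rewrite (@wsum_filter (fun x => x != e)); last first.
  move=> w _ _; rewrite /leaves_empty; case E: park_all => [o|] // eo.
  by apply/allP => x xw; apply: contraNneq eo => <-; rewrite (park_all_pref xw E).
rewrite filter_neq_iota //.
rewrite (eq_wsum (g := fun w =>
    leaves_empty n.+1 k e [::] [seq x <- w | x \in iota 1 e.-1] *
    leaves_empty n.+1 k e [::] [seq x <- w | x \in iota e.+1 (n.+1 - e)])); last first.
  move=> w Hw _.
  have Hw' : all (fun x => (0 < x <= n.+1) && (x != e)) w.
    by apply/allP => x /(allP Hw); rewrite mem_cat !mem_iota; lia.
  rewrite (@leaves_empty_split n.+1 k e [::] [::] [::] w) //.
  have -> : [seq x <- w | x \in iota 1 e.-1] = [seq x <- w | x < e].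
    by apply: eq_in_filter => x /(allP Hw); rewrite mem_cat !mem_iota; lia.
  have -> : [seq x <- w | x \in iota e.+1 (n.+1 - e)] = [seq x <- w | e < x].
    by apply: eq_in_filter => x /(allP Hw); rewrite mem_cat !mem_iota; lia.
  by do 2 case: leaves_empty.
rewrite (@wsum_shuffle _ _ _ (fun u => leaves_empty n.+1 k e [::] u : nat)
                            (fun u => leaves_empty n.+1 k e [::] u : nat)); last first.
  by move=> x; rewrite !mem_iota; lia.
apply: eq_bigr => i _; congr (_ * _ * _).
  apply: eq_wsum => w Hw _; rewrite (@leaves_empty_left n.+1 k e [::] w) //.
  by apply/allP => x /(allP Hw); rewrite mem_iota; lia.
by rewrite -(@wsum_right_block (n.+1 - e) k e) // subnKC //; case/andP: He.
Qed.

(* Only the term where the left word has length e - 1 survives. *)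
Lemma empty_spot_count n k e : 0 < e <= n.+1 ->
  wsum (iota 1 n.+1) n (leaves_empty n.+1 k e [::]) =
  'C(n, e.-1) * #|PF e.-1 k| * (n.+1 - e).+1 ^ (n.+1 - e).-1.
Proof.
move=> He; rewrite empty_spot_shuffle //.
have Hi : e.-1 < n.+1 by lia.
rewrite (bigD1 (Ordinal Hi)) //= big1 ?addn0; last first.
  move=> i /eqP ne; have {}ne : (i : nat) <> e.-1 by move=> ie; apply: ne; apply: val_inj.
  case: (ltngtP i e.-1) => [lt|gt|//].
    by rewrite circular_count_long ?muln0 //; lia.
  by rewrite wsum_park_all_long ?muln0 ?mul0n.
by rewrite -card_PF (_ : n - e.-1 = n.+1 - e) ?circular_count //; lia.
Qed.

Theorem theorem1p1 (n k : nat) (Hn : 1 <= n) (Hk : k <= n - 1) :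
  #|PF n.+1 k| =
  \sum_(0 <= i < n.+1)
     'C(n, i) * minn (i.+1 + k) n.+1 * #|PF i k| * (n - i + 1) ^ (n - i - 1).
Proof.
(* classify by the first n cars and the spot e they leave empty *)
rewrite card_PF wsum_rcons.
rewrite (eq_wsum (g := fun b => \sum_(e <- iota 1 n.+1)
                               leaves_empty n.+1 k e [::] b * minn (e + k) n.+1)); last first.
  move=> w Hw Sw; rewrite last_car_count //.
  by apply/allP => x /(allP Hw); rewrite mem_iota; lia.
rewrite wsum_sum.
rewrite (eq_big_seq (fun e => minn (e + k) n.+1 *
            ('C(n, e.-1) * #|PF e.-1 k| * (n.+1 - e).+1 ^ (n.+1 - e).-1))); last first.
  move=> e; rewrite mem_iota => He.
  under eq_wsum do rewrite mulnC.
  by rewrite wsumZ empty_spot_count //; lia.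
(* reindex by i = e - 1 *)
have -> : iota 1 n.+1 = map succn (iota 0 n.+1) by rewrite -(iotaDl 1 0).
rewrite /index_iota subn0 big_map.
apply: eq_bigr => i _ /=.
rewrite subSS addn1 subn1 mulnA [minn _ _ * _]mulnC -!mulnA.
by congr (_ * _); rewrite mulnCA.
Qed.
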